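(* Let $n\neq 1$ be a real number, $k_n=n-1$, $m_n=\tfrac12(3n-1)$, and $k_0,k_1,k_2\in\mathbb{R}$. On the phase space with canonical coordinates $(r,\phi,p_r,p_\phi)$, $r>0$, consider $$H_{nd}=\tfrac12 r^{2n}\Big(p_r^2+\tfrac{p_\phi^2}{r^2}\Big)+k_0r^{k_n}+r^{k_n/2}\Big(k_1\cos\big(\tfrac{k_n}{2}\phi\big)+k_2\sin\big(\tfrac{k_n}{2}\phi\big)\Big).$$ Define the real functions $$A_{n1}=r^{n-1}p_\phi^2+k_0,\qquad A_{n2}=\frac{1}{r^{k_n/2}}\Big(r^{m_n}p_rp_\phi+k_1\sin\big(\tfrac{k_n}{2}\phi\big)-k_2\cos\big(\tfrac{k_n}{2}\phi\big)\Big),$$ and the complex functions $A_n=A_{n1}+iA_{n2}$ and $N_\phi=\cos(k_n\phi)+i\sin(k_n\phi)$. Then the complex function $J_{23}=A_nN_\phi$, which is quadratic in the momenta, is a constant of motion of $H_{nd}$: $\{J_{23},H_{nd}\}=0$; equivalently $\mathrm{Re}(J_{23})$ and $\mathrm{Im}(J_{23})$ both Poisson commute with $H_{nd}$.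
   Context: The Poisson bracket is the canonical one in $(r,\phi,p_r,p_\phi)$, extended complex-linearly to complex-valued functions. A constant of motion of $H$ is a function $F$ with $\{F,H\}=0$. *)

From Stdlib Require Import Reals.
From Coquelicot Require Import Coquelicot.
Open Scope R_scope.

Definition phase_fun := R -> R -> R -> R -> R.
Definition cphase_fun := R -> R -> R -> R -> C.

Definition d_r (F : phase_fun) r ph pr pph := Derive (fun t => F t ph pr pph) r.
Definition d_phi (F : phase_fun) r ph pr pph := Derive (fun t => F r t pr pph) ph.
Definition d_pr (F : phase_fun) r ph pr pph := Derive (fun t => F r ph t pph) pr.
Definition d_pphi (F : phase_fun) r ph pr pph := Derive (fun t => F r ph pr t) pph.

Definition poisson (F G : phase_fun) r ph pr pph :=
  d_r F r ph pr pph * d_pr G r ph pr pph - d_pr F r ph pr pph * d_r G r ph pr pph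
  + d_phi F r ph pr pph * d_pphi G r ph pr pph - d_pphi F r ph pr pph * d_phi G r ph pr pph.

Definition cpoisson (F : cphase_fun) (G : phase_fun) r ph pr pph : C :=
  (poisson (fun a b c d => Re (F a b c d)) G r ph pr pph,
   poisson (fun a b c d => Im (F a b c d)) G r ph pr pph).

Definition k_n (n : R) := n - 1.
Definition m_n (n : R) := (3 * n - 1) / 2.

(* Real powers r^x for r > 0 via Rpower. *)
Definition H_nd (n k0 k1 k2 : R) : phase_fun := fun r ph pr pph =>
  / 2 * Rpower r (2 * n) * (pr ^ 2 + pph ^ 2 / r ^ 2)
  + k0 * Rpower r (k_n n)
  + Rpower r (k_n n / 2) * (k1 * cos (k_n n / 2 * ph) + k2 * sin (k_n n / 2 * ph)).

Definition A_n1 (n k0 : R) : phase_fun := fun r ph pr pph =>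
  Rpower r (n - 1) * pph ^ 2 + k0.

Definition A_n2 (n k1 k2 : R) : phase_fun := fun r ph pr pph =>
  / Rpower r (k_n n / 2) *
  (Rpower r (m_n n) * pr * pph + k1 * sin (k_n n / 2 * ph) - k2 * cos (k_n n / 2 * ph)).

Definition A_n (n k0 k1 k2 : R) : cphase_fun := fun r ph pr pph =>
  (A_n1 n k0 r ph pr pph, A_n2 n k1 k2 r ph pr pph).

Definition N_phi (n : R) : cphase_fun := fun r ph pr pph =>
  (cos (k_n n * ph), sin (k_n n * ph)).

Definition J23 (n k0 k1 k2 : R) : cphase_fun := fun r ph pr pph =>
  Cmult (A_n n k0 k1 k2 r ph pr pph) (N_phi n r ph pr pph).

(* As N_phi depends on phi alone, the Leibniz rule gives
   {J23, H} = N_phi ({A_n, H} + i k_n A_n dH/dp_phi), and a direct computation of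
   gradients shows {A_n1, H} = k_n A_n2 dH/dp_phi and {A_n2, H} = -k_n A_n1 dH/dp_phi,
   i.e. {A_n, H} = -i k_n A_n dH/dp_phi, so the bracket vanishes. The computation is
   rational once every power of r is written through s = r^(k_n/2):
   r^(2n) = s^4 r^2, r^(k_n) = s^2 and r^(m_n) = s^3 r. *)

From Stdlib Require Import Reals Lra.
From Coquelicot Require Import Coquelicot.
Open Scope R_scope.

Lemma Rpower_affine (x a : R) (j i : nat) :
  0 < x -> Rpower x (INR j * a + INR i) = Rpower x a ^ j * x ^ i.
Proof.
  intros hx.
  rewrite Rpower_plus, (Rmult_comm (INR j)), <- Rpower_mult, !Rpower_pow;
    [ reflexivity | exact hx | apply exp_pos ].
Qed.

Definition has_partials (F : phase_fun) r ph pr pph : Prop :=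
  ex_derive (fun t => F t ph pr pph) r /\ ex_derive (fun t => F r t pr pph) ph /\
  ex_derive (fun t => F r ph t pph) pr /\ ex_derive (fun t => F r ph pr t) pph.

Lemma cpoisson_mul_phase (F G H : phase_fun) (k r ph pr pph : R) :
  has_partials F r ph pr pph -> has_partials G r ph pr pph ->
  cpoisson (fun a b c d => Cmult (F a b c d, G a b c d) (cos (k * b), sin (k * b))) H
    r ph pr pph
  = Cmult (poisson F H r ph pr pph - k * G r ph pr pph * d_pphi H r ph pr pph,
           poisson G H r ph pr pph + k * F r ph pr pph * d_pphi H r ph pr pph)
          (cos (k * ph), sin (k * ph)).
Proof.
  intros (Fr & Fph & Fpr & Fpph) (Gr & Gph & Gpr & Gpph).
  unfold cpoisson, poisson, d_r, d_phi, d_pr, d_pphi, Cmult; simpl.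
  rewrite !Derive_minus, !Derive_plus, !Derive_mult, !Derive_const;
    try solve [ auto_derive; repeat split; assumption ].
  assert (dcos : Derive (fun x => cos (k * x)) ph = - k * sin (k * ph))
    by (apply is_derive_unique; auto_derive; [ exact I | ring ]).
  assert (dsin : Derive (fun x => sin (k * x)) ph = k * cos (k * ph))
    by (apply is_derive_unique; auto_derive; [ exact I | ring ]).
  rewrite dcos, dsin.
  (* [Derive_mult] eta-reduces the last partial derivatives; [ring] needs them in one form. *)
  change (fun t => F r ph pr t) with (F r ph pr).
  change (fun t => G r ph pr t) with (G r ph pr).
  f_equal; ring.
Qed.

Section Gradients.

Variables (n k0 k1 k2 r ph pr pph : R).
Hypothesis hr : 0 < r.

Local Ltac nonzero_side :=
  repeat split;
  first [ apply Rgt_not_eq; first [ apply exp_pos | nra ] | apply exp_pos | nra ].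

Local Ltac solve_partial :=
  auto_derive; [ nonzero_side | field; nonzero_side ].

Lemma H_nd_gradient :
  d_r (H_nd n k0 k1 k2) r ph pr pph =
    n * Rpower r (2 * n) / r * (pr ^ 2 + pph ^ 2 / r ^ 2)
    - Rpower r (2 * n) * pph ^ 2 / r ^ 3
    + k0 * k_n n * Rpower r (k_n n) / r
    + k_n n / 2 * Rpower r (k_n n / 2) / r
      * (k1 * cos (k_n n / 2 * ph) + k2 * sin (k_n n / 2 * ph)) /\
  d_phi (H_nd n k0 k1 k2) r ph pr pph =
    k_n n / 2 * Rpower r (k_n n / 2)
    * (k2 * cos (k_n n / 2 * ph) - k1 * sin (k_n n / 2 * ph)) /\
  d_pr (H_nd n k0 k1 k2) r ph pr pph = Rpower r (2 * n) * pr /\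
  d_pphi (H_nd n k0 k1 k2) r ph pr pph = Rpower r (2 * n) * pph / r ^ 2.
Proof.
  unfold d_r, d_phi, d_pr, d_pphi, H_nd, Rpower.
  refine (conj _ (conj _ (conj _ _))); apply is_derive_unique; solve_partial.
Qed.

Lemma A_n1_gradient :
  d_r (A_n1 n k0) r ph pr pph = (n - 1) * Rpower r (n - 1) / r * pph ^ 2 /\
  d_phi (A_n1 n k0) r ph pr pph = 0 /\
  d_pr (A_n1 n k0) r ph pr pph = 0 /\
  d_pphi (A_n1 n k0) r ph pr pph = 2 * Rpower r (n - 1) * pph.
Proof.
  unfold d_r, d_phi, d_pr, d_pphi, A_n1, Rpower.
  refine (conj _ (conj _ (conj _ _))); apply is_derive_unique; solve_partial.
Qed.

Lemma A_n2_gradient :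
  d_r (A_n2 n k1 k2) r ph pr pph =
    (m_n n - k_n n / 2) * Rpower r (m_n n) / (r * Rpower r (k_n n / 2)) * pr * pph
    - k_n n / 2 / (r * Rpower r (k_n n / 2))
      * (k1 * sin (k_n n / 2 * ph) - k2 * cos (k_n n / 2 * ph)) /\
  d_phi (A_n2 n k1 k2) r ph pr pph =
    k_n n / 2 / Rpower r (k_n n / 2)
    * (k1 * cos (k_n n / 2 * ph) + k2 * sin (k_n n / 2 * ph)) /\
  d_pr (A_n2 n k1 k2) r ph pr pph = Rpower r (m_n n) / Rpower r (k_n n / 2) * pph /\
  d_pphi (A_n2 n k1 k2) r ph pr pph = Rpower r (m_n n) / Rpower r (k_n n / 2) * pr.
Proof.
  unfold d_r, d_phi, d_pr, d_pphi, A_n2, Rpower.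
  refine (conj _ (conj _ (conj _ _))); apply is_derive_unique; solve_partial.
Qed.

Lemma Rpower_via_half_power :
  Rpower r (2 * n) = Rpower r ((n - 1) / 2) ^ 4 * r ^ 2 /\
  Rpower r (n - 1) = Rpower r ((n - 1) / 2) ^ 2 /\
  Rpower r ((3 * n - 1) / 2) = Rpower r ((n - 1) / 2) ^ 3 * r.
Proof.
  assert (scale : forall x j i, x = INR j * ((n - 1) / 2) + INR i ->
    Rpower r x = Rpower r ((n - 1) / 2) ^ j * r ^ i)
    by (intros x j i ->; apply Rpower_affine, hr).
  split; [| split].
  - rewrite (scale (2 * n) 4%nat 2%nat); [ ring | simpl; field ].
  - rewrite (scale (n - 1) 2%nat 0%nat); [ ring | simpl; field ].
  - rewrite (scale ((3 * n - 1) / 2) 3%nat 1%nat); [ ring | simpl; field ].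
Qed.

Local Ltac nonzero_r_s := split; [ lra | apply Rgt_not_eq, exp_pos ].

Lemma poisson_A_n1_H_nd :
  poisson (A_n1 n k0) (H_nd n k0 k1 k2) r ph pr pph
  = k_n n * A_n2 n k1 k2 r ph pr pph * d_pphi (H_nd n k0 k1 k2) r ph pr pph.
Proof.
  destruct H_nd_gradient as (Hr & Hph & Hpr & Hpph).
  destruct A_n1_gradient as (Ar & Aph & Apr & Apph).
  unfold poisson; rewrite Hr, Hph, Hpr, Hpph, Ar, Aph, Apr, Apph.
  unfold A_n2, k_n, m_n.
  destruct Rpower_via_half_power as (e2n & ek & em); rewrite e2n, ek, em.
  field; nonzero_r_s.
Qed.

Lemma poisson_A_n2_H_nd :
  poisson (A_n2 n k1 k2) (H_nd n k0 k1 k2) r ph pr pph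
  = - k_n n * A_n1 n k0 r ph pr pph * d_pphi (H_nd n k0 k1 k2) r ph pr pph.
Proof.
  destruct H_nd_gradient as (Hr & Hph & Hpr & Hpph).
  destruct A_n2_gradient as (Ar & Aph & Apr & Apph).
  unfold poisson; rewrite Hr, Hph, Hpr, Hpph, Ar, Aph, Apr, Apph.
  unfold A_n1, k_n, m_n.
  destruct Rpower_via_half_power as (e2n & ek & em); rewrite e2n, ek, em.
  field; nonzero_r_s.
Qed.

Lemma A_n_has_partials :
  has_partials (A_n1 n k0) r ph pr pph /\ has_partials (A_n2 n k1 k2) r ph pr pph.
Proof.
  unfold has_partials, A_n1, A_n2, Rpower.
  repeat match goal with |- _ /\ _ => split end; auto_derive; nonzero_side.
Qed.

End Gradients.

Theorem proposition2 (n k0 k1 k2 : R) (hn : n <> 1) :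
  forall r ph pr pph : R, 0 < r ->
    cpoisson (J23 n k0 k1 k2) (H_nd n k0 k1 k2) r ph pr pph = RtoC 0.
Proof.
  intros r ph pr pph hr.
  destruct (A_n_has_partials n k0 k1 k2 r ph pr pph hr) as (A1 & A2).
  unfold J23, A_n, N_phi.
  rewrite (cpoisson_mul_phase _ _ _ _ _ _ _ _ A1 A2).
  rewrite poisson_A_n1_H_nd, poisson_A_n2_H_nd by exact hr.
  unfold Cmult, RtoC; simpl; f_equal; ring.
Qed.
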